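(* Consider the $N$-node uplink system described in the context, let $\beta_1,\dots,\beta_N>0$, define the Lyapunov function $L(t)=\frac1N\sum_{i=1}^N\beta_iD_{t,i}$ and, for a given action $\bm{a}_t=(a_{t,1},\dots,a_{t,N})\in\{0,1\}^N$ with $\sum_i a_{t,i}\le1$, the Lyapunov drift $\Delta=\mathbb{E}[L(t+1)-L(t)\mid \bm{B}_t,\bm{a}_t]$, where $\bm{B}_t$ is the AP's current belief state (the destination AoIs $D_{t,i}$ together with the local-age beliefs $\bm{b}_{t,i}$). Let $G_{t,i}=D_{t,i}-\sum_{d\ge1}b_{t,i}(d)\,d$. Then the drift is minimized over all such actions by scheduling a node $i$ with maximal value of $\beta_ip_iG_{t,i}$.
   Context: System: $N$ nodes $i=1,\dots,N$ and one access point (AP); time slots $t=0,1,2,\dots$. Node $i$ receives a status update in each slot independently with probability $\lambda_i\in(0,1]$ and keeps only the latest one. Local age: $d_{t+1,i}=1$ if an update arrives at node $i$ in slot $t$, else $d_{t+1,i}=d_{t,i}+1$; always $D_{t,i}\ge d_{t,i}$. In each slot the AP schedules at most one node ($a_{t,i}=1$ iff node $i$ is scheduled); a scheduled node $i$'s transmission succeeds with probability $p_i\in(0,1]$ independently. If node $i$ is scheduled and succeeds in slot $t$, the AP observes $d_{t,i}$ and $D_{t+1,i}=d_{t,i}+1$; otherwise the AP observes nothing about $d_{t,i}$ and $D_{t+1,i}=D_{t,i}+1$. The belief $b_{t,i}(d)=\Pr(d_{t,i}=d\mid\text{AP history up to slot }t-1)$, and $D_{t,i}$ is known to the AP. *)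

From HB Require Import structures.
From mathcomp Require Import all_boot all_order all_algebra.
Set Implicit Arguments. Unset Strict Implicit. Unset Printing Implicit Defensive.
Import Order.TTheory GRing.Theory Num.Theory.
Local Open Scope ring_scope.

Section AoI.
Variables (R : realFieldType) (N : nat).

Definition valid_action (a : {ffun 'I_N -> bool}) : Prop :=
  (\sum_(i < N) (a i : nat) <= 1)%N.

Definition sched (i : 'I_N) : {ffun 'I_N -> bool} := [ffun j => j == i].

(* Belief state B_t: destination AoIs D i (known to the AP) and local-age
   beliefs b i d = Pr(d_{t,i} = d | history); since 1 <= d_{t,i} <= D_{t,i},
   b i is supported on {1,...,D i}. *)
Definition valid_belief (D : 'I_N -> nat) (b : 'I_N -> nat -> R) : Prop :=
  forall i, [/\ (1 <= D i)%N,
                (forall d, 0 <= b i d),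
                (forall d, (d == 0)%N || (D i < d)%N -> b i d = 0)
              & \sum_(1 <= d < (D i).+1) b i d = 1].

Definition succ_prob (p : 'I_N -> R) (a : {ffun 'I_N -> bool}) (i : 'I_N) : R :=
  if a i then p i else 0.

(* E[D_{t+1,i} | B_t, a_t]: average over the success event s (probability
   succ_prob) and the local age d_{t,i} = d (probability b i d); the next
   destination AoI is d + 1 if i is scheduled and succeeds, D i + 1 otherwise. *)
Definition exp_next_D (D : 'I_N -> nat) (b : 'I_N -> nat -> R)
  (p : 'I_N -> R) (a : {ffun 'I_N -> bool}) (i : 'I_N) : R :=
  \sum_(s : bool) \sum_(1 <= d < (D i).+1)
     ((if s then succ_prob p a i else 1 - succ_prob p a i) * b i d *
      (if a i && s then (d.+1)%:R else ((D i).+1)%:R)).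

Definition lyap (beta : 'I_N -> R) (D : 'I_N -> R) : R :=
  N%:R^-1 * \sum_(i < N) beta i * D i.

(* Lyapunov drift E[L(t+1) - L(t) | B_t, a_t] (by linearity of expectation). *)
Definition drift (beta : 'I_N -> R) (D : 'I_N -> nat) (b : 'I_N -> nat -> R)
  (p : 'I_N -> R) (a : {ffun 'I_N -> bool}) : R :=
  lyap beta (exp_next_D D b p a) - lyap beta (fun i => (D i)%:R).

Definition Gval (D : 'I_N -> nat) (b : 'I_N -> nat -> R) (i : 'I_N) : R :=
  (D i)%:R - \sum_(1 <= d < (D i).+1) b i d * d%:R.

End AoI.

From HB Require Import structures.
From mathcomp Require Import all_boot all_order all_algebra.
From mathcomp Require Import ring.
Import Order.TTheory GRing.Theory Num.Theory.
Local Open Scope ring_scope.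

(* Given the belief, D_{t+1,i} is D_{t,i} + 1 unless node i is scheduled and
   succeeds, in which case it is d_{t,i} + 1; hence
   E[D_{t+1,i}] = D_{t,i} + 1 - a_{t,i} p_i G_{t,i}.  The drift is thus a
   constant minus (1/N) sum_i a_{t,i} beta_i p_i G_{t,i}, and since
   G_{t,i} >= 0 (the local age never exceeds D_{t,i}), an action scheduling at
   most one node makes this sum largest by picking a maximal weight.  The
   arrival rates lambda_i do not enter the one-step drift. *)

Section ActionWeights.
Variables (R : realFieldType) (N : nat).

Lemma valid_action_sched (i : 'I_N) : valid_action (sched i).
Proof.
rewrite /valid_action (bigD1 i) //= big1 ?ffunE ?eqxx // => j /negbTE.
by rewrite ffunE => ->.
Qed.

Lemma sum_sched (w : 'I_N -> R) (i : 'I_N) :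
  \sum_(j < N) (sched i j)%:R * w j = w i.
Proof.
rewrite (bigD1 i) //= big1 ?ffunE ?eqxx ?mul1r ?addr0 // => j /negbTE.
by rewrite ffunE => ->; rewrite mul0r.
Qed.

Lemma sum_action_le_max (w : 'I_N -> R) (i : 'I_N) (a : {ffun 'I_N -> bool}) :
  valid_action a -> 0 <= w i -> (forall j, w j <= w i) ->
  \sum_(j < N) (a j)%:R * w j <= w i.
Proof.
move=> Ha wi_ge0 wi_max.
apply: (@le_trans _ _ (\sum_(j < N) (a j)%:R * w i)).
  by apply: ler_sum => j _; apply: ler_wpM2l.
rewrite -mulr_suml -natr_sum -[leRHS]mul1r.
by apply: ler_wpM2r => //; rewrite lern1.
Qed.

End ActionWeights.

Section Drift.
Variables (R : realFieldType) (N : nat).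
Variables (D : 'I_N -> nat) (b : 'I_N -> nat -> R) (p beta : 'I_N -> R).

Lemma exp_next_DE (a : {ffun 'I_N -> bool}) (j : 'I_N) :
  \sum_(1 <= d < (D j).+1) b j d = 1 ->
  exp_next_D D b p a j = (D j).+1%:R - (a j)%:R * (p j * Gval D b j).
Proof.
move=> b_sum1; rewrite /exp_next_D big_bool /= /succ_prob /Gval.
have sum_scaled c : \sum_(1 <= d < (D j).+1) c * b j d * (D j).+1%:R
                    = c * (D j).+1%:R.
  by rewrite -mulr_suml -mulr_sumr b_sum1 mulr1.
case: (a j) => /=; rewrite !sum_scaled; last by ring.
have -> : \sum_(1 <= d < (D j).+1) p j * b j d * d.+1%:R
    = p j * \sum_(1 <= d < (D j).+1) b j d * d%:R
      + p j * \sum_(1 <= d < (D j).+1) b j d.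
  rewrite !mulr_sumr -big_split /=; apply: eq_bigr => d _.
  by rewrite -addn1 natrD; ring.
rewrite b_sum1 -addn1 natrD; ring.
Qed.

Lemma Gval_ge0 (i : 'I_N) : valid_belief D b -> 0 <= Gval D b i.
Proof.
move=> /(_ i) [_ b_ge0 _ b_sum1]; rewrite /Gval subr_ge0.
apply: (@le_trans _ _ (\sum_(1 <= d < (D i).+1) b i d * (D i)%:R)).
  by apply: ler_sum_nat => d /andP [_ ltdD]; rewrite ler_wpM2l // ler_nat -ltnS.
by rewrite -mulr_suml b_sum1 mul1r.
Qed.

Lemma driftE (a : {ffun 'I_N -> bool}) : valid_belief D b ->
  drift beta D b p a = N%:R^-1 *
    (\sum_(j < N) beta j - \sum_(j < N) (a j)%:R * (beta j * p j * Gval D b j)).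
Proof.
move=> Hb; rewrite /drift /lyap -mulrBr -!sumrB; congr (_ * _).
apply: eq_bigr => j _; have [_ _ _ b_sum1] := Hb j.
rewrite exp_next_DE // -addn1 natrD; ring.
Qed.

End Drift.

Theorem proposition2 (R : realFieldType) (N : nat)
  (lambda p beta : 'I_N -> R) (D : 'I_N -> nat) (b : 'I_N -> nat -> R)
  (Hlambda : forall i, 0 < lambda i <= 1)
  (Hp : forall i, 0 < p i <= 1)
  (Hbeta : forall i, 0 < beta i)
  (Hb : valid_belief D b)
  (i : 'I_N)
  (Hmax : forall j, beta j * p j * Gval D b j <= beta i * p i * Gval D b i) :
  valid_action (sched i) /\
  forall a : {ffun 'I_N -> bool}, valid_action a ->
    drift beta D b p (sched i) <= drift beta D b p a.
Proof.
split=> [|a Ha]; first exact: valid_action_sched.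
rewrite !driftE // sum_sched.
rewrite ler_wpM2l ?invr_ge0 ?ler0n // lerD2l lerN2.
apply: sum_action_le_max => //.
have [p_gt0 _] := andP (Hp i).
by rewrite !mulr_ge0 ?Gval_ge0 ?ltW ?Hbeta.
Qed.
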